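(* Let $\varphi=\bigwedge_{j\in G}B_j\omega_j$ be a DBI normal formula, where $\varnothing\neq G\subseteq\mathcal{A}$. (1) If $i\notin\mathsf{ta}(\varphi)$, i.e., $i\notin G$, then for every formula $\sigma$ and every pointed Kripke model $(\mathcal{M},v)$: $\mathcal{M},v\vDash B_i\sigma$ iff $\mathcal{M}\odot\mathcal{U}_\varphi,(v,0)\vDash B_i\sigma$. (2) If $i\in\mathsf{ta}(\varphi)$ but $\omega_i=\bigwedge_{j\in H}B_j\pi_j$ has no propositional component, then for every purely propositional formula $\chi$ and every pointed Kripke model $(\mathcal{M},v)$: $\mathcal{M},v\vDash B_i\chi$ iff $\mathcal{M}\odot\mathcal{U}_\varphi,(v,0)\vDash B_i\chi$.
   Context: Agents $\mathcal{A}=\{1,\dots,n\}$, $n>1$; language $\mathcal{L}$: $\varphi ::= p \mid \neg\varphi \mid (\varphi\wedge\varphi)\mid B_i\varphi$, $\top$ the usual tautology. Kripke model $\mathcal{M}=\langle S,R,V\rangle$ (nonempty $S$, $R_i\subseteq S\times S$, $V:\mathit{Prop}\to 2^S$), standard truth. Action model $\mathcal{U}=\langle E,Q,\mathsf{pre}\rangle$ (nonempty $E$, $Q_i\subseteq E\times E$, $\mathsf{pre}:E\to\mathcal{L}$). Pointed update of $(\mathcal{M},w)$ with $(\mathcal{U},\alpha)$, defined iff $\mathcal{M},w\vDash\mathsf{pre}(\alpha)$: with $T=\{(x,\beta)\in S\times E\mid\mathcal{M},x\vDash\mathsf{pre}(\beta)\}$, $\mathcal{M}\odot\mathcal{U}=\langle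 S^{\mathcal U},R^{\mathcal U},V^{\mathcal U}\rangle$ where $S^{\mathcal U}$ is the smallest subset of $T$ containing $(w,\alpha)$ closed under: $(x,\beta)\in S^{\mathcal U}$, $(u,\gamma)\in T$, $xR_iu$, $\beta Q_i\gamma$ imply $(u,\gamma)\in S^{\mathcal U}$; $R^{\mathcal U}_i$ relates $(x,\beta),(u,\gamma)\in S^{\mathcal U}$ iff $xR_iu$ and $\beta Q_i\gamma$; $V^{\mathcal U}(p)=\{(x,\beta)\in S^{\mathcal U}\mid x\in V(p)\}$. Target agents: $\mathsf{ta}(p)=\varnothing$, $\mathsf{ta}(\neg\phi)=\mathsf{ta}(\phi)$, $\mathsf{ta}(\phi\wedge\psi)=\mathsf{ta}(\phi)\cup\mathsf{ta}(\psi)$, $\mathsf{ta}(B_i\phi)=\{i\}$. DBI formulas: $\varphi ::= B_i\xi \mid B_i(\xi\wedge\varphi)\mid(\varphi\wedge\varphi)\mid B_i\varphi$, $\xi$ purely propositional. DBI normal: $B_i\xi$ always; $B_i\varphi$, $B_i(\xi\wedge\varphi)$ iff $\varphi$ DBI normal and $i\notin\mathsf{ta}(\varphi)$; $\varphi\wedge\psi$ iff both DBI normal and $\mathsf{ta}(\varphi)\cap\mathsf{ta}(\psi)=\varnothing$. Action model $\mathcal{U}_\varphi=\langle E^\varphi,Q^\varphi,\mathsf{pre}^\varphi\rangle$ for DBI normal $\varphi$, recursively; always $E^\varphi=\{0,-1\}\sqcup D^\varphi$, $\varnothing\ne D^\varphi\subseteq\{1,2,\dots\}$, $\mathsf{pre}^\varphi(0)=\mathsf{pre}^\varphi(-1)=\top$;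 $\underline{Q}_j:=Q_j\cap((E\setminus\{0\})\times(E\setminus\{0\}))$. (1) $\varphi=B_i\xi$: $D=\{m\}$, $\mathsf{pre}(m)=\xi$, $Q_j=\{(0,-1),(m,-1),(-1,-1)\}$ ($j\ne i$), $Q_i=\{(0,m),(m,m),(-1,-1)\}$. (2) $\varphi=B_i\psi$: fresh $m\ge1$, $m\notin D^\psi$; $D^\varphi=D^\psi\sqcup\{m\}$; $\mathsf{pre}^\varphi$ extends $\mathsf{pre}^\psi$ with $\mathsf{pre}^\varphi(m)=\top$; $Q^\varphi_j=\underline{Q}^\psi_j\cup\{(0,-1)\}\cup\{(m,k)\mid(0,k)\in Q^\psi_j\}$ ($j\ne i$); $Q^\varphi_i=\underline{Q}^\psi_i\cup\{(0,m),(m,m)\}$. (3) $\varphi=B_i(\xi\wedge\psi)$: as (2) but $\mathsf{pre}^\varphi(m)=\xi$. (4) $\varphi=\psi\wedge\theta$: with $D^\psi\cap D^\theta=\varnothing$, $D^\varphi=D^\psi\sqcup D^\theta$, $\mathsf{pre}^\varphi=\mathsf{pre}^\psi\cup\mathsf{pre}^\theta$, $Q^\varphi_j=\underline{Q}^\psi_j\cup\underline{Q}^\theta_j\cup\{(0,k)\mid(0,k)\in Q^\psi_j\cup Q^\theta_j, k\in D^\psi\sqcup D^\theta\}\cup\{(0,-1)\mid\text{no such }k\text{ exists}\}$. *)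

From Stdlib Require Import ZArith List.
Import ListNotations.
Open Scope Z_scope.

Definition agent (n : nat) : Type := {i : nat | (1 <= i <= n)%nat}.

Inductive form (n : nat) : Type :=
| Var  : nat -> form n
| Neg  : form n -> form n
| Conj : form n -> form n -> form n
| Bel  : agent n -> form n -> form n.
Arguments Var {n} _.
Arguments Neg {n} _.
Arguments Conj {n} _ _.
Arguments Bel {n} _ _.

Definition top {n} : form n := Neg (Conj (Var 0%nat) (Neg (Var 0%nat))).

Record kmodel (n : nat) := KM {
  kst  : Type;
  krel : agent n -> kst -> kst -> Prop;
  kval : nat -> kst -> Prop }.
Arguments kst {n} _.
Arguments krel {n} _ _ _ _.
Arguments kval {n} _ _ _.

Fixpoint sat {n} (M : kmodel n) (w : kst M) (f : form n) : Prop :=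
  match f with
  | Var p => kval M p w
  | Neg g => ~ sat M w g
  | Conj g h => sat M w g /\ sat M w h
  | Bel i g => forall u, krel M i w u -> sat M u g
  end.

Record amodel (n : nat) := AM {
  aev  : Type;
  arel : agent n -> aev -> aev -> Prop;
  apre : aev -> form n }.
Arguments aev {n} _.
Arguments arel {n} _ _ _ _.
Arguments apre {n} _ _.

Inductive gen {n} (M : kmodel n) (U : amodel n) (w : kst M) (a : aev U)
  : kst M -> aev U -> Prop :=
| gen_root : gen M U w a w a
| gen_step : forall x b u c j,
    gen M U w a x b -> sat M u (apre U c) -> krel M j x u -> arel U j b c ->
    gen M U w a u c.

(* Pointed update, defined when M,w |= pre(a) (hypothesis hd). *)
Definition update {n} (M : kmodel n) (U : amodel n) (w : kst M) (a : aev U)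
  (hd : sat M w (apre U a)) : kmodel n :=
  {| kst := {p : kst M * aev U | gen M U w a (fst p) (snd p)};
     krel := fun j p q =>
       krel M j (fst (proj1_sig p)) (fst (proj1_sig q)) /\
       arel U j (snd (proj1_sig p)) (snd (proj1_sig q));
     kval := fun p s => kval M p (fst (proj1_sig s)) |}.

Definition update_root {n} (M : kmodel n) (U : amodel n) (w : kst M) (a : aev U)
  (hd : sat M w (apre U a)) : kst (update M U w a hd) :=
  exist _ (w, a) (gen_root M U w a).

Fixpoint ta {n} (f : form n) : list (agent n) :=
  match f with
  | Var _ => []
  | Neg g => ta g
  | Conj g h => ta g ++ ta h
  | Bel i _ => [i]
  end.

Fixpoint is_prop {n} (f : form n) : Prop :=
  match f with
  | Var _ => True
  | Neg g => is_prop g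
  | Conj g h => is_prop g /\ is_prop h
  | Bel _ _ => False
  end.

Inductive dbi_normal {n} : form n -> Prop :=
| dn_Bprop : forall i xi, is_prop xi -> dbi_normal (Bel i xi)
| dn_B : forall i g, dbi_normal g -> ~ In i (ta g) -> dbi_normal (Bel i g)
| dn_Bconj : forall i xi g, is_prop xi -> dbi_normal g -> ~ In i (ta g) ->
    dbi_normal (Bel i (Conj xi g))
| dn_conj : forall g h, dbi_normal g -> dbi_normal h ->
    (forall j, In j (ta g) -> ~ In j (ta h)) -> dbi_normal (Conj g h).

Fixpoint conjuncts {n} (f : form n) : list (form n) :=
  match f with
  | Conj g h => conjuncts g ++ conjuncts h
  | _ => [f]
  end.

(* Construction of U_phi.  Events are integers; E = {0,-1} ⊔ D.
   Uphi phi D Q pre  holds iff (D,Q,pre) is a (any admissible choice of fresh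
   indices m) result of the recursive construction (1)-(4). *)
Definition inE (D : Z -> Prop) (e : Z) : Prop := e = 0 \/ e = -1 \/ D e.

Inductive Uphi {n} : form n -> (Z -> Prop) -> (agent n -> Z -> Z -> Prop) ->
                     (Z -> form n) -> Prop :=
| U_Bprop : forall i xi m D Q pre,
    is_prop xi -> 1 <= m ->
    (forall e, D e <-> e = m) ->
    pre 0 = top -> pre (-1) = top -> pre m = xi ->
    (forall j e f, j <> i ->
       (Q j e f <-> (e = 0 /\ f = -1) \/ (e = m /\ f = -1) \/ (e = -1 /\ f = -1))) ->
    (forall e f,
       (Q i e f <-> (e = 0 /\ f = m) \/ (e = m /\ f = m) \/ (e = -1 /\ f = -1))) ->
    Uphi (Bel i xi) D Q pre
| U_B : forall i g m Dg Qg preg D Q pre,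
    Uphi g Dg Qg preg -> 1 <= m -> ~ Dg m ->
    (forall e, D e <-> Dg e \/ e = m) ->
    (forall e, inE Dg e -> pre e = preg e) ->
    pre 0 = top -> pre (-1) = top -> pre m = top ->
    (forall j e f, j <> i ->
       (Q j e f <-> (Qg j e f /\ e <> 0 /\ f <> 0) \/ (e = 0 /\ f = -1)
                    \/ (e = m /\ Qg j 0 f))) ->
    (forall e f,
       (Q i e f <-> (Qg i e f /\ e <> 0 /\ f <> 0) \/ (e = 0 /\ f = m)
                    \/ (e = m /\ f = m))) ->
    Uphi (Bel i g) D Q pre
| U_Bconj : forall i xi g m Dg Qg preg D Q pre,
    is_prop xi ->
    Uphi g Dg Qg preg -> 1 <= m -> ~ Dg m ->
    (forall e, D e <-> Dg e \/ e = m) ->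
    (forall e, inE Dg e -> pre e = preg e) ->
    pre 0 = top -> pre (-1) = top -> pre m = xi ->
    (forall j e f, j <> i ->
       (Q j e f <-> (Qg j e f /\ e <> 0 /\ f <> 0) \/ (e = 0 /\ f = -1)
                    \/ (e = m /\ Qg j 0 f))) ->
    (forall e f,
       (Q i e f <-> (Qg i e f /\ e <> 0 /\ f <> 0) \/ (e = 0 /\ f = m)
                    \/ (e = m /\ f = m))) ->
    Uphi (Bel i (Conj xi g)) D Q pre
| U_conj : forall g h Dg Qg preg Dh Qh preh D Q pre,
    Uphi g Dg Qg preg -> Uphi h Dh Qh preh ->
    (forall e, Dg e -> ~ Dh e) ->
    (forall e, D e <-> Dg e \/ Dh e) ->
    (forall e, inE Dg e -> pre e = preg e) ->
    (forall e, inE Dh e -> pre e = preh e) ->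
    pre 0 = top -> pre (-1) = top ->
    (forall j e f,
       (Q j e f <->
          (Qg j e f /\ e <> 0 /\ f <> 0) \/ (Qh j e f /\ e <> 0 /\ f <> 0)
          \/ (e = 0 /\ (Qg j 0 f \/ Qh j 0 f) /\ (Dg f \/ Dh f))
          \/ (e = 0 /\ f = -1 /\
              ~ (exists k, (Qg j 0 k \/ Qh j 0 k) /\ (Dg k \/ Dh k))))) ->
    Uphi (Conj g h) D Q pre.

Definition Umodel {n} (D : Z -> Prop) (Q : agent n -> Z -> Z -> Prop)
  (pre : Z -> form n) : amodel n :=
  {| aev := {e : Z | inE D e};
     arel := fun j e f => Q j (proj1_sig e) (proj1_sig f);
     apre := fun e => pre (proj1_sig e) |}.

Definition ev0 {n} (D : Z -> Prop) (Q : agent n -> Z -> Z -> Prop)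
  (pre : Z -> form n) : aev (Umodel D Q pre) :=
  exist _ 0 (or_introl eq_refl).

Lemma Uphi_pre0 {n} (f : form n) D Q pre : Uphi f D Q pre -> pre 0 = top.
Proof. intros H; destruct H; assumption. Qed.

Lemma Uphi_defined {n} (f : form n) D Q pre (HU : Uphi f D Q pre)
  (M : kmodel n) (v : kst M) : sat M v (apre (Umodel D Q pre) (ev0 D Q pre)).
Proof. simpl. rewrite (Uphi_pre0 f D Q pre HU). simpl. tauto. Qed.

(* In the product update the world component of a state determines the truth
   of propositional formulas.  The event -1 of U_phi has trivial precondition
   and -1 as its only successor, so the part of the update lying over -1 is a
   copy of M.  If i is not a target agent of phi, the only i-successor of the
   event 0 is -1, hence B_i-formulas at (v,0) are evaluated in that copy of M.
   If B_i omega is a conjunct of phi with omega purely modal, the event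
   created for it has precondition top and is an i-successor of 0, so every
   i-successor u of v survives as a state (u,g) and propositional beliefs of
   agent i transfer. *)
From Stdlib Require Import ZArith List Lia Classical.

Lemma sat_top {n} (M : kmodel n) (x : kst M) : sat M x top.
Proof. simpl. tauto. Qed.

Section ProductUpdate.
Context {n : nat} (M : kmodel n) (U : amodel n) (w : kst M) (a : aev U)
  (hd : sat M w (apre U a)).

Definition upd_world (s : kst (update M U w a hd)) : kst M := fst (proj1_sig s).
Definition upd_event (s : kst (update M U w a hd)) : aev U := snd (proj1_sig s).

Definition upd_succ (s : kst (update M U w a hd)) (j : agent n) (u : kst M)
  (c : aev U) (Hu : krel M j (upd_world s) u) (Hc : arel U j (upd_event s) c)
  (Hpre : sat M u (apre U c)) : kst (update M U w a hd) :=
  exist _ (u, c) (gen_step M U w a _ _ u c j (proj2_sig s) Hpre Hu Hc).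

Lemma sat_update_prop (s : kst (update M U w a hd)) (f : form n) :
  is_prop f -> sat _ s f <-> sat M (upd_world s) f.
Proof.
  induction f as [p | g IHg | g IHg h IHh | j g _]; simpl; intros Hf.
  - tauto.
  - rewrite IHg by exact Hf. tauto.
  - destruct Hf as [Hg Hh]. rewrite IHg, IHh by assumption. tauto.
  - contradiction.
Qed.

Lemma sat_update_Bel (R : aev U -> Prop) (s : kst (update M U w a hd))
  (i : agent n) (f : form n) :
  (forall c, arel U i (upd_event s) c -> R c) ->
  (exists c, R c /\ arel U i (upd_event s) c /\ forall x, sat M x (apre U c)) ->
  (forall t, R (upd_event t) -> sat _ t f <-> sat M (upd_world t) f) ->
  sat _ s (Bel i f) <-> sat M (upd_world s) (Bel i f).
Proof.
  intros Hsucc [c [Rc [Hc Hpre]]] Htransfer. simpl. split.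
  - intros Hs u Hu.
    set (t := upd_succ s i u c Hu Hc (Hpre u)).
    apply (Htransfer t Rc), Hs. split; assumption.
  - intros Hs t [Hu Hc'].
    apply (Htransfer t (Hsucc _ Hc')), Hs, Hu.
Qed.

Definition skip_events (P : aev U -> Prop) : Prop :=
  (forall j b c, P b -> arel U j b c -> P c) /\
  (forall j b, P b -> exists c, P c /\ arel U j b c) /\
  (forall b x, P b -> sat M x (apre U b)).

Lemma sat_update_skip (P : aev U -> Prop) (f : form n) :
  skip_events P -> forall s : kst (update M U w a hd),
  P (upd_event s) -> sat _ s f <-> sat M (upd_world s) f.
Proof.
  intros HP. destruct HP as [Hclosed [Hserial Hpre]].
  induction f as [p | g IHg | g IHg h IHh | j g IHg]; intros s Hs; simpl.
  - tauto.
  - rewrite IHg by exact Hs. tauto.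
  - rewrite IHg, IHh by exact Hs. tauto.
  - apply (sat_update_Bel P s j g).
    + intros c Hc. exact (Hclosed j _ c Hs Hc).
    + destruct (Hserial j _ Hs) as [c [Pc Hc]].
      exists c. repeat split; auto.
    + exact IHg.
Qed.

End ProductUpdate.

Section UphiInvariants.
Context {n : nat}.

Lemma Uphi_pre_m1 (f : form n) D Q pre : Uphi f D Q pre -> pre (-1)%Z = top.
Proof. intros H; destruct H; assumption. Qed.

Lemma Uphi_D_pos (f : form n) D Q pre : Uphi f D Q pre ->
  forall e, D e -> (1 <= e)%Z.
Proof.
  induction 1 as [i xi m D Q pre _ Hm HD | i g m Dg Qg preg D Q pre _ IH Hm _ HD
    | i xi g m Dg Qg preg D Q pre _ _ IH Hm _ HD
    | g h Dg Qg preg Dh Qh preh D Q pre _ IHg _ IHh _ HD];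
    intros e He; apply HD in He.
  - lia.
  - destruct He as [He | ->]; auto.
  - destruct He as [He | ->]; auto.
  - destruct He; auto.
Qed.

Lemma Uphi_Q_m1 (f : form n) D Q pre : Uphi f D Q pre ->
  forall j e, Q j (-1)%Z e <-> e = (-1)%Z.
Proof.
  induction 1 as [i xi m D Q pre _ Hm _ _ _ _ HQj HQi
    | i g m Dg Qg preg D Q pre _ IH Hm _ _ _ _ _ _ HQj HQi
    | i xi g m Dg Qg preg D Q pre _ _ IH Hm _ _ _ _ _ _ HQj HQi
    | g h Dg Qg preg Dh Qh preh D Q pre _ IHg _ IHh _ _ _ _ _ _ HQ];
    intros j e.
  - destruct (classic (j = i)) as [-> | Hj]; [rewrite HQi | rewrite (HQj j _ _ Hj)]; lia.
  - destruct (classic (j = i)) as [-> | Hj];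
      [rewrite HQi, IH | rewrite (HQj j _ _ Hj), IH]; lia.
  - destruct (classic (j = i)) as [-> | Hj];
      [rewrite HQi, IH | rewrite (HQj j _ _ Hj), IH]; lia.
  - rewrite HQ, IHg, IHh. lia.
Qed.

Lemma Uphi_Q0_notin_ta (f : form n) D Q pre : Uphi f D Q pre ->
  forall i, ~ In i (ta f) -> forall e, Q i 0%Z e <-> e = (-1)%Z.
Proof.
  induction 1 as [i xi m D Q pre _ Hm _ _ _ _ HQj _
    | i g m Dg Qg preg D Q pre _ _ Hm _ _ _ _ _ _ HQj _
    | i xi g m Dg Qg preg D Q pre _ _ _ Hm _ _ _ _ _ _ HQj _
    | g h Dg Qg preg Dh Qh preh D Q pre Hg IHg Hh IHh _ _ _ _ _ _ HQ];
    intros k Hk e; simpl in Hk.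
  1-3: assert (k <> i) as Hki by (intros ->; tauto); rewrite (HQj k _ _ Hki); lia.
  rewrite in_app_iff in Hk.
  assert (Hkg : ~ In k (ta g)) by tauto.
  assert (Hkh : ~ In k (ta h)) by tauto.
  assert (Hnot_D : forall c, Qg k 0%Z c \/ Qh k 0%Z c -> ~ (Dg c \/ Dh c)).
  { intros c Hc [Hd | Hd].
    all: apply (Uphi_D_pos _ _ _ _ Hg) in Hd || apply (Uphi_D_pos _ _ _ _ Hh) in Hd.
    all: rewrite (IHg k Hkg), (IHh k Hkh) in Hc; lia. }
  rewrite HQ. split.
  - intros [[_ [H0 _]] | [[_ [H0 _]] | [[_ [Hc Hd]] | [_ [He _]]]]];
      [lia | lia | exfalso; exact (Hnot_D e Hc Hd) | exact He].
  - intros ->. right; right; right. repeat split.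
    intros [c [Hc Hd]]. exact (Hnot_D c Hc Hd).
Qed.

Lemma is_prop_conjunct_not_Bel (f : form n) : is_prop f ->
  exists c, In c (conjuncts f) /\ forall j p, c <> Bel j p.
Proof.
  induction f as [p | g _ | g IHg h _ | j g _]; simpl; intros Hf.
  - eexists; split; [left; reflexivity | discriminate].
  - eexists; split; [left; reflexivity | discriminate].
  - destruct Hf as [Hg _]. destruct (IHg Hg) as [c [Hc Hb]].
    exists c. split; [apply in_app_iff; auto | exact Hb].
  - contradiction.
Qed.

(* Only rule (2) yields a conjunct [B_i omega] with [omega] purely modal,
   and its fresh event has precondition top. *)
Lemma Uphi_modal_conjunct_event (f : form n) D Q pre : Uphi f D Q pre ->
  forall i omega, In (Bel i omega) (conjuncts f) ->
  (forall c, In c (conjuncts omega) -> exists j p, c = Bel j p) ->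
  exists g, Q i 0%Z g /\ D g /\ pre g = top.
Proof.
  induction 1 as [i xi m D Q pre Hxi _ _ _ _ _ _ _
    | i g m Dg Qg preg D Q pre _ _ _ _ HD _ _ _ Hprem _ HQi
    | i xi g m Dg Qg preg D Q pre Hxi _ _ _ _ _ _ _ _ _ _ _
    | g h Dg Qg preg Dh Qh preh D Q pre _ IHg _ IHh _ HD Hpreg Hpreh _ _ HQ];
    intros k omega Hin Hmodal; simpl in Hin.
  - destruct Hin as [E | []]. injection E as <- <-.
    destruct (is_prop_conjunct_not_Bel _ Hxi) as [c [Hc Hb]].
    destruct (Hmodal c Hc) as [j [p ->]]. exfalso. eapply Hb. reflexivity.
  - destruct Hin as [E | []]. injection E as <- <-.
    exists m. repeat split; auto; [apply HQi | apply HD]; auto.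
  - destruct Hin as [E | []]. injection E as <- <-.
    destruct (is_prop_conjunct_not_Bel _ Hxi) as [c [Hc Hb]].
    destruct (Hmodal c (in_or_app _ _ _ (or_introl Hc))) as [j [p ->]].
    exfalso. eapply Hb. reflexivity.
  - apply in_app_iff in Hin.
    destruct Hin as [Hin | Hin];
      [destruct (IHg _ _ Hin Hmodal) as [e [Hq [Hd Hp]]]
      | destruct (IHh _ _ Hin Hmodal) as [e [Hq [Hd Hp]]]];
      exists e; repeat split.
    + apply HQ. do 2 right. left. auto.
    + apply HD. auto.
    + rewrite Hpreg; [exact Hp | right; right; exact Hd].
    + apply HQ. do 2 right. left. auto.
    + apply HD. auto.
    + rewrite Hpreh; [exact Hp | right; right; exact Hd].
Qed.

End UphiInvariants.

Definition ev_m1 {n} (D : Z -> Prop) (Q : agent n -> Z -> Z -> Prop)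
  (pre : Z -> form n) : aev (Umodel D Q pre) :=
  exist _ (-1)%Z (or_intror (or_introl eq_refl)).

Lemma Uphi_skip_m1 {n} (f : form n) D Q pre (M : kmodel n) :
  Uphi f D Q pre ->
  skip_events M (Umodel D Q pre) (fun e => proj1_sig e = (-1)%Z).
Proof.
  intros HU. repeat split.
  - intros j b c Hb Hbc. simpl in Hbc. rewrite Hb in Hbc.
    exact (proj1 (Uphi_Q_m1 _ _ _ _ HU j _) Hbc).
  - intros j b Hb. exists (ev_m1 D Q pre). split; [reflexivity |].
    simpl. rewrite Hb. apply (Uphi_Q_m1 _ _ _ _ HU). reflexivity.
  - intros b x Hb. simpl. rewrite Hb, (Uphi_pre_m1 _ _ _ _ HU). apply sat_top.
Qed.

Theorem corollary1 (n : nat) (Hn : (1 < n)%nat) (phi : form n)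
  (Hphi : dbi_normal phi)
  (D : Z -> Prop) (Q : agent n -> Z -> Z -> Prop) (pre : Z -> form n)
  (HU : Uphi phi D Q pre) (i : agent n) :
  (~ In i (ta phi) ->
   forall (sigma : form n) (M : kmodel n) (v : kst M),
     sat M v (Bel i sigma) <->
     sat (update M (Umodel D Q pre) v (ev0 D Q pre) (Uphi_defined phi D Q pre HU M v))
         (update_root M (Umodel D Q pre) v (ev0 D Q pre) (Uphi_defined phi D Q pre HU M v))
         (Bel i sigma))
  /\
  (In i (ta phi) ->
   forall omega : form n, In (Bel i omega) (conjuncts phi) ->
   (forall c, In c (conjuncts omega) -> exists j pi, c = Bel j pi) ->
   forall (chi : form n), is_prop chi ->
   forall (M : kmodel n) (v : kst M),
     sat M v (Bel i chi) <->
     sat (update M (Umodel D Q pre) v (ev0 D Q pre) (Uphi_defined phi D Q pre HU M v))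
         (update_root M (Umodel D Q pre) v (ev0 D Q pre) (Uphi_defined phi D Q pre HU M v))
         (Bel i chi)).
Proof.
  split.
  - intros Hi sigma M v. symmetry.
    pose proof (Uphi_Q0_notin_ta _ _ _ _ HU i Hi) as HQ0.
    apply (sat_update_Bel M (Umodel D Q pre) v (ev0 D Q pre) _
             (fun e => proj1_sig e = (-1)%Z)).
    + intros c Hc. exact (proj1 (HQ0 _) Hc).
    + exists (ev_m1 D Q pre). repeat split; [apply HQ0; reflexivity |].
      intros x. simpl. rewrite (Uphi_pre_m1 _ _ _ _ HU). apply sat_top.
    + apply (sat_update_skip M _ v _ _ _ sigma (Uphi_skip_m1 phi D Q pre M HU)).
  - intros _ omega Hin Hmodal chi Hchi M v. symmetry.
    destruct (Uphi_modal_conjunct_event _ _ _ _ HU _ _ Hin Hmodal) as [g [Hq [Hd Hp]]].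
    apply (sat_update_Bel M (Umodel D Q pre) v (ev0 D Q pre) _ (fun _ => True));
      [tauto | |].
    + exists (exist (inE D) g (or_intror (or_intror Hd))).
      repeat split; [exact Hq |]. intros x. simpl. rewrite Hp. apply sat_top.
    + intros t _. apply sat_update_prop, Hchi.
Qed.
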